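(* Let $p$ be a prime and $g$ a generator of $U(\mathbb Z/p\mathbb Z)$. Let $\beta_1,\beta_2$ be real numbers with $\beta_1\ge\beta_2\ge 0$, and let $\varphi=\cos\frac{2\pi}{p-1}+i\sin\frac{2\pi}{p-1}$. Then there exists a nonnegative $g$-circulant matrix $A$ of order $p$ whose eigenvalues are $\beta_1,\beta_2,\beta_2\varphi,\beta_2\varphi^2,\dots,\beta_2\varphi^{p-2}$.
   Context: A $g$-circulant matrix of order $p$ is a matrix $g\text{-}circ(a_1,\dots,a_p)$ whose $(i,j)$ entry is $a_{j-(i-1)g}$ (subscripts modulo $p$ in $\{1,\dots,p\}$), i.e. each row is the preceding row cyclically shifted $g$ places to the right. *)

From HB Require Import structures.
From mathcomp Require Import all_boot all_order all_algebra all_fingroup all_solvable.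
From mathcomp Require Import complex.
From mathcomp Require Import all_classical all_reals all_analysis.
Set Implicit Arguments. Unset Strict Implicit. Unset Printing Implicit Defensive.
Import Order.TTheory GRing.Theory Num.Theory.
Local Open Scope ring_scope.

(* g-circulant matrix g-circ(a_1,...,a_p) of order p, 0-indexed:
   the (i,j) entry (i,j in {0,...,p-1}) is a_{(j - i*g) mod p}, i.e. row i
   is row i-1 shifted cyclically g places to the right.  The sequence
   a is given as a function nat -> R of which only a 0, ..., a (p-1) are used. *)
Definition gcirc (R : Type) (p g : nat) (a : nat -> R) : 'M[R]_p :=
  \matrix_(i < p, j < p) a ((j + (p - (i * g) %% p)) %% p)%N.

(* Write the g-circulant with first row (a + b, a, ..., a) as a J + b P, where
   J is the all-ones matrix and P the permutation matrix of x |-> x g on Z/pZ.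
   Since g generates the units, relabelling 0, g^0, ..., g^(p-2) conjugates P
   to diag(1, C) with C the cyclic shift of order p - 1, and leaves J fixed.
   As C fixes the all-ones vector, a shear then makes the matrix block upper
   triangular with diagonal blocks p a + b and b C, so its characteristic
   polynomial is (X - (p a + b)) (X^(p-1) - b^(p-1)), whose roots are p a + b
   and the b phi^k.  Take b = b2 and a = (b1 - b2) / p. *)

From mathcomp Require Import all_boot all_order all_algebra all_fingroup all_solvable.
From mathcomp Require Import complex.
From mathcomp Require Import all_classical all_reals all_analysis.
From mathcomp Require Import ring lra.
Set Implicit Arguments. Unset Strict Implicit. Unset Printing Implicit Defensive.
Import Order.TTheory GRing.Theory Num.Theory.
Local Open Scope ring_scope.

Lemma char_poly_ublock (R : comNzRingType) m n
    (A : 'M[R]_m) (U : 'M[R]_(m, n)) (D : 'M[R]_n) :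
  char_poly (block_mx A U 0 D) = char_poly A * char_poly D.
Proof.
rewrite /char_poly /char_poly_mx map_block_mx /= map_mx0 scalar_mx_block.
by rewrite opp_block_mx add_block_mx oppr0 addr0 det_ublock.
Qed.

Lemma char_poly_similar (R : comUnitRingType) n (S A B : 'M[R]_n) :
  S \in unitmx -> S *m A = B *m S -> char_poly A = char_poly B.
Proof.
move=> S_unit SA_BS.
have SAS : map_mx polyC S *m char_poly_mx A = char_poly_mx B *m map_mx polyC S.
  rewrite /char_poly_mx mulmxBr mulmxBl -!map_mxM SA_BS.
  by rewrite mul_mx_scalar mul_scalar_mx.
have := congr1 (fun q => ((\det S)^-1)%:P * q) (congr1 determinant SAS).
rewrite /= !det_mulmx det_map_mx [_ * (\det S)%:P]mulrC !mulrA -polyCM.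
by rewrite mulVr ?mul1r // -unitmxE.
Qed.

Lemma mul_const_mx (R : pzSemiRingType) m n p (a b : R) :
  (const_mx a : 'M[R]_(m, n)) *m (const_mx b : 'M[R]_(n, p)) = const_mx (a * b *+ n).
Proof.
apply/matrixP => i j; rewrite !mxE (eq_bigr (fun=> a * b)) => [|k _].
  by rewrite sumr_const card_ord.
by rewrite !mxE.
Qed.

Lemma char_poly_mx11 (R : comNzRingType) (c : R) :
  char_poly (const_mx c : 'M[R]_1) = 'X - c%:P.
Proof. by rewrite /char_poly det_mx11 !mxE mulr1n. Qed.

Lemma char_poly_const_add_lift0 (R : comUnitRingType) n (a b : R) (C : 'M[R]_n) :
  C *m (const_mx 1 : 'cV[R]_n) = const_mx 1 ->
  char_poly (const_mx a + b *: lift0_mx C) =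
    ('X - (a *+ n.+1 + b)%:P) * char_poly (b *: C).
Proof.
move=> C1.
pose E : 'M[R]_(1 + n) := block_mx 1 0 (- const_mx 1) 1.
have E_unit : E \in unitmx by rewrite unitmxE det_lblock !det1 mulr1 unitr1.
pose B := block_mx (const_mx (a *+ n.+1 + b) : 'M[R]_1) (const_mx a) 0 (b *: C).
rewrite (char_poly_similar (B := B) E_unit) /B ?char_poly_ublock ?char_poly_mx11 //.
rewrite -[const_mx a]block_mx_const /lift0_mx scale_block_mx add_block_mx !mulmx_block.
rewrite !mul1mx !mul0mx !mulmx1 !mulmx0 !addr0 !add0r !mulNmx.
congr block_mx;
  rewrite ?scalemx1 ?scaler0 ?addr0 ?mulmxN ?mulmxDr ?mul_const_mx ?mul_mx_scalar;
  rewrite -?scalemxAl ?C1;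
  by apply/matrixP => i j; rewrite !mxE ?ord1 ?eqxx /=; ring.
Qed.

Lemma char_poly_const_add_perm (R : comUnitRingType) n (a b : R) (s t u : 'S_n) :
  (s * t = u * s)%g ->
  char_poly (const_mx a + b *: perm_mx t) = char_poly (const_mx a + b *: perm_mx u).
Proof.
move=> stu; apply: (char_poly_similar (unitmx_perm _ s)).
have sJ : perm_mx s *m const_mx a = const_mx a :> 'M[R]_n.
  by rewrite -row_permE row_perm_const.
have Js : const_mx a *m perm_mx s = const_mx a :> 'M[R]_n.
  by rewrite -[s]invgK -col_permE col_perm_const.
by rewrite mulmxDr mulmxDl -scalemxAr -scalemxAl -!perm_mxM stu sJ Js.
Qed.

Definition ordS_perm n : 'S_n := perm (@ordS_inj n).

Lemma char_poly_companion (R : comNzRingType) (q : {poly R}) d (B : 'M[R]_d) :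
  q \is monic -> size q = d.+1 ->
  (forall i j : 'I_d,
     B i j = if i == d.-1 :> nat then - q`_j else (i.+1 == j :> nat)%:R) ->
  char_poly B = q.
Proof.
move=> q_monic /(congr1 predn) /= dq BE; move: B BE; rewrite -dq => B BE.
rewrite -[RHS](companionmxK q_monic); congr char_poly.
by apply/matrixP => i j; rewrite BE !mxE.
Qed.

Lemma char_poly_scale_ordS_perm (F : fieldType) n (b : F) :
  char_poly (b *: perm_mx (ordS_perm n.+1)) = 'X^(n.+1) - (b ^+ n.+1)%:P.
Proof.
have [->|b_neq0] := eqVneq b 0.
  rewrite scale0r char_poly_trig; last by apply/is_trig_mxP => i j _; rewrite mxE.
  rewrite expr0n subr0 (eq_bigr (fun=> 'X)) ?prodr_const ?card_ord // => i _.
  by rewrite mxE subr0.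
pose D : 'M[F]_n.+1 := diag_mx (\row_i b ^+ i).
have D_unit : D \in unitmx.
  by rewrite unitmxE det_diag unitfE; apply/prodf_neq0 => i _; rewrite mxE expf_neq0.
pose B : 'M[F]_n.+1 := \matrix_(i, j)
  if i == n :> nat then b ^+ n.+1 * (j == 0 :> nat)%:R else (i.+1 == j :> nat)%:R.
rewrite (char_poly_similar (B := B) D_unit).
  apply: char_poly_companion; rewrite ?monicXnsubC ?size_XnsubC // => i j.
  rewrite mxE; case: ifP => // _.
  rewrite coefB coefXn coefC (ltn_eqF (ltn_ord j)) sub0r opprK mulrC.
  by case: eqP; rewrite ?mul1r ?mul0r.
apply/matrixP => i j; rewrite mul_diag_mx mul_mx_diag !mxE permE -val_eqE /=.
have [i_n|i_n] := eqVneq (i : nat) n.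
  rewrite i_n modnn eq_sym; case: eqP => [->|_]; last by rewrite !mulr0 mul0r.
  by rewrite !mulr1 exprSr.
rewrite modn_small; last by rewrite ltnS ltn_neqAle i_n -ltnS ltn_ord.
case: eqP => [<-|_]; last by rewrite !mulr0 mul0r.
by rewrite mulr1 mul1r exprSr.
Qed.

Lemma prod_XsubC_prim_root (F : fieldType) n (z c : F) : n.-primitive_root z ->
  \prod_(k < n) ('X - (c * z ^+ k)%:P) = 'X^n - (c ^+ n)%:P.
Proof.
move=> z_prim; have n_gt0 := prim_order_gt0 z_prim.
have [->|c_neq0] := eqVneq c 0.
  rewrite expr0n gtn_eqF // subr0 (eq_bigr (fun=> 'X)) ?prodr_const ?card_ord //.
  by move=> k _; rewrite mul0r subr0.
rewrite [RHS](@all_roots_prod_XsubC _ _ [seq c * z ^+ k | k <- index_iota 0 n]).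
- by rewrite (monicP (monicXnsubC _ n_gt0)) scale1r big_map big_mkord.
- by rewrite size_XnsubC // size_map size_iota subn0.
- apply/allP => _ /mapP[k _ ->]; rewrite rootE !hornerE exprMn exprAC.
  by rewrite (prim_expr_order z_prim) expr1n mulr1 subrr.
rewrite uniq_rootsE map_inj_in_uniq ?iota_uniq // => k l.
rewrite !mem_index_iota => /andP[_ k_lt] /andP[_ l_lt] /(mulfI c_neq0) /eqP.
by rewrite (eq_prim_root_expr z_prim) !modn_small // => /eqP.
Qed.

Lemma order_Zp_generator p (g : {unit 'Z_p}) :
  prime p -> generator (units_Zp p) g -> #[g]%g = p.-1.
Proof.
move=> p_prime g_gen.
by rewrite orderE -(eqP g_gen) card_units_Zp ?prime_gt0 // totient_prime.
Qed.

Definition Zp_mul_perm p (u : {unit 'Z_p}) : {perm 'Z_p} := perm (mulIr (valP u)).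

Section PowPerm.

Variables (m : nat) (g : {unit 'Z_m.+2}).
Hypothesis g_order : #[g]%g = m.+1.

Definition pow_perm_fun (i : 'I_m.+2) : 'Z_m.+2 :=
  if unlift ord0 i is Some k then val (g ^+ k)%g else 0.

Lemma pow_perm_fun_inj : injective pow_perm_fun.
Proof.
have unit_neq0 k : val (g ^+ k)%g <> 0.
  by move=> gk0; have := valP (g ^+ k)%g; rewrite gk0 unitr0.
move=> i j; rewrite /pow_perm_fun.
case: (unliftP ord0 i) => [k|] ->; case: (unliftP ord0 j) => [l|] -> //.
- move/val_inj/eqP; rewrite eq_expg_mod_order g_order !modn_small //.
  by move/eqP/val_inj->.
- by move/unit_neq0.
- by move/esym/unit_neq0.
Qed.

Definition pow_perm : 'S_m.+2 := perm pow_perm_fun_inj.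

Lemma pow_perm_Zp_mul :
  (pow_perm * Zp_mul_perm g = lift0_perm (ordS_perm m.+1) * pow_perm)%g.
Proof.
apply/permP => i; rewrite !permM.
case: (unliftP ord0 i) => [k|] ->; last first.
  by rewrite lift0_perm0 !permE /pow_perm_fun unlift_none mul0r.
rewrite lift0_perm_lift !permE /pow_perm_fun !liftK -FinRing.val_unitM -expgSr.
by rewrite -(expg_mod_order g k.+1) g_order.
Qed.

End PowPerm.

Lemma cos_lt1 (R : realType) (x : R) : 0 < x < pi *+ 2 -> cos x < 1.
Proof.
have cos_lt1_pi y : 0 < y <= pi -> cos y < 1.
  move=> /andP[y_gt0 y_le]; rewrite -cos0 ltr_cos // in_itv /= ?lexx ?pi_ge0 //.
  by rewrite (ltW y_gt0).
move=> /andP[x_gt0 x_lt]; have [x_le|x_gt] := leP x pi.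
  by rewrite cos_lt1_pi ?x_gt0.
have cos_sym : cos (pi *+ 2 - x) = cos x.
  by rewrite cosB cos2pi sin2pi mul1r mul0r addr0.
by rewrite -cos_sym cos_lt1_pi //; apply/andP; split; lra.
Qed.

Lemma exprn_cos_sin (R : realType) (t : R) k :
  (cos t +i* sin t)%C ^+ k = (cos (k%:R * t) +i* sin (k%:R * t))%C.
Proof.
elim: k => [|k IHk]; first by rewrite expr0 mul0r cos0 sin0.
rewrite exprSr IHk -addn1 natrD mulrDl mul1r cosD sinD.
by simpc; congr (_ +i* _)%C; ring.
Qed.

Lemma prim_root_cos_sin (R : realType) n : (0 < n)%N ->
  n.-primitive_root ((cos (2 * pi / n%:R) +i* sin (2 * pi / n%:R))%C : R[i]).
Proof.
move=> n_gt0; apply/andP; split => //; apply/forallP => i; apply/eqP.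
rewrite unity_rootE exprn_cos_sin.
have n_neq0 : n%:R != 0 :> R by rewrite pnatr_eq0 -lt0n.
have [i_n|i_n] := eqVneq i.+1 n.
  rewrite i_n mulrC divfK // mulr_natl cos2pi sin2pi.
  by rewrite eq_complex /= !eqxx.
apply/negbTE; rewrite eq_complex /=; apply/negP => /andP[/eqP cos1 _].
suff : cos (i.+1%:R * (2 * pi / n%:R)) < 1 :> R by rewrite cos1 ltxx.
have t_gt0 : 0 < i.+1%:R / n%:R :> R by rewrite divr_gt0 ?ltr0n.
have t_lt1 : i.+1%:R / n%:R < 1 :> R.
  by rewrite ltr_pdivrMr ?ltr0n // mul1r ltr_nat ltn_neqAle i_n ltn_ord.
have := pi_gt0 R; rewrite (_ : i.+1%:R * _ = pi *+ 2 * (i.+1%:R / n%:R)); last by ring.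
by move=> pi_gt0; apply: cos_lt1; apply/andP; split; nra.
Qed.

Lemma modnDsub_eq0 p j x : (x < p)%N -> (j < p)%N ->
  ((j + (p - x)) %% p == 0)%N = (j == x).
Proof.
move=> x_lt j_lt.
have -> : 0%N = ((x + (p - x)) %% p)%N by rewrite subnKC ?modnn // ltnW.
by rewrite eqn_modDr !modn_small.
Qed.

Lemma gcirc_const_add_delta (R : pzRingType) m (g : {unit 'Z_m.+2}) (a b : R) :
  gcirc m.+2 (val g : 'Z_m.+2) (fun k => a + b * (k == 0)%:R) =
    const_mx a + b *: perm_mx (Zp_mul_perm g).
Proof.
by apply/matrixP => i j; rewrite !mxE permE modnDsub_eq0 ?ltn_mod // -val_eqE eq_sym.
Qed.

Theorem mainTheorem10 (R : realType) (p : nat) (hp : prime p)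
  (g : {unit 'Z_p}) (hg : generator (units_Zp p) g)
  (b1 b2 : R) (hb12 : b2 <= b1) (hb2 : 0 <= b2) :
  let phi : R[i] :=
    (cos (2 * pi / (p.-1)%:R) +i* sin (2 * pi / (p.-1)%:R))%C in
  exists A : 'M[R]_p,
    (exists a : nat -> R, A = gcirc p (val g : 'Z_p) a) /\
    (forall i j, 0 <= A i j) /\
    char_poly (map_mx (fun x : R => x%:C)%C A) =
      ('X - (b1%:C)%C%:P) * \prod_(k < p.-1) ('X - ((b2%:C)%C * phi ^+ k)%:P).
Proof.
move: hp g hg; case: p => [|[|m]] // hp g hg phi /=.
pose a := (b1 - b2) / m.+2%:R.
have a_ge0 : 0 <= a by rewrite divr_ge0 ?subr_ge0.
have a_b2 : a *+ m.+2 + b2 = b1 by rewrite /a -mulr_natr mulfVK ?subrK ?pnatr_eq0.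
exists (gcirc m.+2 (val g : 'Z_m.+2) (fun k => a + b2 * (k == 0)%:R)).
split; first by eexists.
split; first by move=> i j; rewrite mxE addr_ge0 // mulr_ge0.
rewrite (@gcirc_const_add_delta R m g a b2) -(map_char_poly (real_complex R)).
rewrite (char_poly_const_add_perm _ _ (pow_perm_Zp_mul (order_Zp_generator hp hg))).
rewrite -lift0_mx_perm char_poly_const_add_lift0; last first.
  by rewrite -row_permE row_perm_const.
rewrite char_poly_scale_ordS_perm a_b2.
rewrite (prod_XsubC_prim_root _ (prim_root_cos_sin R (ltn0Sn m))).
rewrite rmorphM !rmorphB /= map_polyX map_polyXn !map_polyC.
by congr (_ * (_ - _%:P)); apply: rmorphXn.
Qed.
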